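(* For every $\epsilon>0$ there is a constant $C(\epsilon)>0$ such that $R_3(n)\le C(\epsilon)\, n^{1/3+\epsilon}$ for all positive integers $n$.
   Context: For a positive integer $n$, $R_3(n)$ denotes the number of ordered triples $(x,y,z)$ of positive integers with $n = xyz + x + y + z$. *)

From Stdlib Require Import Reals Arith List.
Import ListNotations.

Definition is_R3_sol (n x y z : nat) : bool :=
  (1 <=? x) && (1 <=? y) && (1 <=? z) && Nat.eqb (x*y*z + x + y + z) n.

(* R_3(n): number of ordered triples of positive integers (x,y,z) with
   n = xyz + x + y + z.  Any solution has x,y,z <= n, so it suffices
   to count triples in [0,n]^3. *)
Definition R3 (n : nat) : nat :=
  length (filter (fun t : nat * nat * nat =>
             let '(x, y, z) := t in is_R3_sol n x y z)
    (list_prod (list_prod (seq 0 (S n)) (seq 0 (S n))) (seq 0 (S n)))).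

From Stdlib Require Import Reals Lra Lia.

(* Let (x, y, z) be a solution of n = xyz + x + y + z.  Its smallest
   coordinate a satisfies a^3 <= xyz <= n, so by the symmetry of the
   equation R_3(n) is at most three times the number of solutions whose
   first coordinate a satisfies a^3 <= n.  For a fixed first coordinate a,
   the identity (ab + 1)(ac + 1) = an + 1 - a^2 shows that b determines c
   and that ab + 1 divides M_a = an + 1 - a^2 <= n^2; hence a carries at
   most d(M_a) solutions.  The divisor bound d(m)^k <= (k^k)^(2^k) m (split
   m into prime powers: (e+1)^k <= p^e when p >= 2^k, and (e+1)^k <= k^k p^e
   for the fewer than 2^k smaller primes) and the fact that at most n^(1/3)
   values of a are admissible give the integer inequality
        R_3(n)^(3k) <= 27^k ((k^k)^(2^k))^3 n^(k+6).
   Taking 3k-th roots and choosing k >= 2/eps proves the theorem. *)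

Module R3Count.
From mathcomp Require Import all_boot zify.
Set Implicit Arguments. Unset Strict Implicit.

Lemma leq_expn2r m n e : m <= n -> m ^ e <= n ^ e.
Proof. by case: e => [|e] mn; rewrite ?expn0 // leq_exp2r. Qed.

Definition ndiv m := size (divisors m).

(* d is submultiplicative: a divisor d of xy is gcd(d, x) times a divisor
   of y. *)
Lemma ndiv_mul x y : 0 < x -> 0 < y -> ndiv (x * y) <= ndiv x * ndiv y.
Proof.
move=> x0 y0; rewrite /ndiv -(size_allpairs muln).
apply: uniq_leq_size; first exact: divisors_uniq.
move=> d; rewrite -dvdn_divisors ?muln_gt0 ?x0 // => dxy.
have d0 : 0 < d by apply: dvdn_gt0 dxy; rewrite muln_gt0 x0.
have g0 : 0 < gcdn d x by rewrite gcdn_gt0 d0.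
apply/allpairsP; exists (gcdn d x, d %/ gcdn d x) => /=; split.
- by rewrite -dvdn_divisors // dvdn_gcdr.
- rewrite -dvdn_divisors // dvdn_divLR ?dvdn_gcdl //.
  have : d %| gcdn (x * y) (d * y) by rewrite dvdn_gcd dxy dvdn_mulr.
  by rewrite [y * _]mulnC muln_gcdl gcdnC.
- by rewrite mulnC divnK ?dvdn_gcdl.
Qed.

(* The divisors of p^a are among 1, p, ..., p^a. *)
Lemma ndiv_prime_power p a : prime p -> ndiv (p ^ a) <= a.+1.
Proof.
move=> pp; rewrite /ndiv.
apply: (@leq_trans (size (map (expn p) (iota 0 a.+1)))); last first.
  by rewrite size_map size_iota.
apply: uniq_leq_size; first exact: divisors_uniq.
move=> d; rewrite -dvdn_divisors ?expn_gt0 ?prime_gt0 //.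
by case/(dvdn_pfactor _ _ pp) => i ia ->; apply: map_f; rewrite mem_iota.
Qed.

Section DivisorBound.
Variable k : nat.
Hypothesis k_gt0 : 0 < k.

Lemma prime_power_cost p a : 1 < p ->
  a.+1 ^ k <= (if p < 2 ^ k then k ^ k else 1) * p ^ a.
Proof.
move=> p1; case: ltnP => hp.
- set q := a %/ k.
  have aq : a.+1 <= k * q.+1.
    have := divn_eq a k; have := ltn_pmod a k_gt0; rewrite -/q; nia.
  have qa : (2 ^ q) ^ k <= p ^ a.
    by rewrite -expnM (@leq_trans (2 ^ a)) ?leq_exp2l ?leq_divM ?leq_expn2r.
  apply: (leq_trans _ (leq_mul (leqnn _) qa)).
  rewrite -expnMn leq_exp2r // (leq_trans aq) // leq_mul2l ltn_expl ?orbT //.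
- rewrite mul1n; apply: (@leq_trans ((2 ^ a) ^ k)).
    by rewrite leq_exp2r // ltn_expl.
  by rewrite -expnM mulnC expnM leq_expn2r.
Qed.

(* Paying the factor for the prime p lowers the number of primes below N
   that may still be paid for. *)
Lemma cost_absorb c N p :
  c ^ (N - p.+1) * (if p < N then c else 1) = c ^ (N - p).
Proof.
case: ltnP => hp; last first.
  have e1 : N - p.+1 = 0 by lia.
  have e2 : N - p = 0 by lia.
  by rewrite e1 e2 muln1.
by rewrite -expnSr subnSK.
Qed.

(* If every prime factor of m is at least j, only the primes in [j, 2^k)
   cost a factor k^k.  Induction on m, splitting off its smallest prime. *)
Lemma ndiv_pow_bound_from j m : 0 < m ->
  (forall q, prime q -> q %| m -> j <= q) ->
  ndiv m ^ k <= (k ^ k) ^ (2 ^ k - j) * m.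
Proof.
elim/ltn_ind: m j => m IH j m0 hj.
have [m_le1 | m_gt1] := leqP m 1.
  have -> : m = 1 by lia.
  by rewrite exp1n muln1 !expn_gt0 k_gt0.
set p := pdiv m; set a := logn p m.
have pp : prime p by apply: pdiv_prime.
have [m' cop def] := pfactor_coprime pp m0.
have m'0 : 0 < m' by move: m0; rewrite def muln_gt0 => /andP[].
have a0 : 0 < a by rewrite logn_gt0 mem_primes pp m0 pdiv_dvd.
have m'_lt : m' < m.
  by rewrite def -{1}(muln1 m') ltn_mul2l m'0 -(expn0 p) ltn_exp2l ?prime_gt1.
have m'_primes : forall q, prime q -> q %| m' -> p.+1 <= q.
  move=> q qp qm'.
  have pq : p <= q by apply: pdiv_min_dvd; rewrite ?prime_gt1 // def dvdn_mulr.
  rewrite ltn_neqAle pq andbT; apply/eqP => epq.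
  by move: cop; rewrite prime_coprime // epq qm'.
have split_m : ndiv m ^ k <= ndiv m' ^ k * a.+1 ^ k.
  rewrite -expnMn leq_expn2r // def (leq_trans (ndiv_mul m'0 _)) ?expn_gt0 ?prime_gt0 //.
  by rewrite leq_mul2l ndiv_prime_power ?orbT.
have ih := IH _ m'_lt p.+1 m'0 m'_primes.
have cost := @prime_power_cost p a (prime_gt1 pp).
apply: (leq_trans split_m); apply: (leq_trans (leq_mul ih cost)).
rewrite mulnACA cost_absorb -def leq_mul2r leq_pexp2l ?orbT ?expn_gt0 ?k_gt0 //.
by rewrite leq_sub2l // hj // pdiv_dvd.
Qed.

Lemma ndiv_pow_bound m : 0 < m -> ndiv m ^ k <= (k ^ k) ^ (2 ^ k) * m.
Proof.
by move=> m0; rewrite -(subn0 (2 ^ k)) ndiv_pow_bound_from // => q _ _.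
Qed.

End DivisorBound.

Lemma sum_boolE T (P : pred T) (s : seq T) : \sum_(x <- s) P x = count P s.
Proof. by rewrite -sumn_count sumnE big_map. Qed.

Lemma length_size T (l : list T) : length l = size l.
Proof. by elim: l => //= x l ->. Qed.

Lemma filterE T f (l : list T) : List.filter f l = filter f l.
Proof. by elim: l => //= x l ->. Qed.

Lemma seq_iota a b : List.seq a b = iota a b.
Proof. by elim: b a => //= b ih a; rewrite ih. Qed.

Lemma sum_list_prod A B (F : A * B -> nat) (l1 : list A) (l2 : list B) :
  \sum_(p <- List.list_prod l1 l2) F p = \sum_(a <- l1) \sum_(b <- l2) F (a, b).
Proof.
elim: l1 => [|a l1 ih]; first by rewrite !big_nil.
rewrite big_cons -ih /=.
by rewrite -[(_ ++ _)%list]/(map (pair a) l2 ++ _) big_cat big_map.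
Qed.

Definition upto n := iota 0 n.+1.

Definition sol n x y z := [&& 0 < x, 0 < y, 0 < z & x * y * z + x + y + z == n].

Lemma is_R3_solE n x y z : is_R3_sol n x y z = sol n x y z.
Proof.
have lebE a b : Nat.leb a b = (a <= b) by apply/idP/idP => [/Nat.leb_le/leP|/leP/Nat.leb_le].
have eqbE a b : Nat.eqb a b = (a == b) by apply/idP/idP => [/Nat.eqb_eq/eqP|/eqP/Nat.eqb_eq].
by rewrite /is_R3_sol !lebE eqbE -!andbA.
Qed.

Lemma R3E n :
  R3 n = \sum_(x <- upto n) \sum_(y <- upto n) \sum_(z <- upto n) sol n x y z.
Proof.
rewrite /R3 length_size filterE size_filter seq_iota -sum_boolE.
rewrite !sum_list_prod; apply: eq_bigr => x _; apply: eq_bigr => y _.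
by apply: eq_bigr => z _; rewrite is_R3_solE.
Qed.

Lemma sol_swap12 n x y z : sol n x y z = sol n y x z.
Proof.
by apply/and4P/and4P => -[? ? ? /eqP e]; split=> //; apply/eqP; lia.
Qed.

Lemma sol_rotate n x y z : sol n x y z = sol n z x y.
Proof.
by apply/and4P/and4P => -[? ? ? /eqP e]; split=> //; apply/eqP; lia.
Qed.

(* The smallest coordinate m of a solution satisfies m^3 <= xyz <= n. *)
Lemma sol_min_cube n x y z : sol n x y z ->
  (x ^ 3 <= n) || (y ^ 3 <= n) || (z ^ 3 <= n).
Proof.
case/and4P=> _ _ _ /eqP e; set m := minn x (minn y z).
have [mx my mz] : [/\ m <= x, m <= y & m <= z] by rewrite /m; split; lia.
have m3 : m ^ 3 <= n.
  apply: (@leq_trans (x * y * z)); last by lia.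
  by rewrite !expnS expn0 muln1 mulnA !leq_mul.
have [E|[E|E]] : m = x \/ m = y \/ m = z by rewrite /m; lia.
all: by rewrite E in m3; rewrite m3 ?orbT.
Qed.

Lemma sum_bool_le1 (T : eqType) (P : pred T) (s : seq T) :
  uniq s -> (forall a b, P a -> P b -> a = b) -> \sum_(x <- s) P x <= 1.
Proof.
move=> us Pinj; rewrite sum_boolE.
elim: s us => [|a s ih] //= /andP[nas us]; case Pa: (P a) => /=; last exact: ih.
suff -> : count P s = 0 by [].
apply/eqP; rewrite -leqn0 leqNgt -has_count; apply/hasP => -[b bs Pb].
by move: nas; rewrite (Pinj _ _ Pa Pb) bs.
Qed.

Definition fibre n a := \sum_(b <- upto n) \sum_(c <- upto n) sol n a b c.

Lemma sol_factor n a b c : sol n a b c ->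
  (a * b + 1) * (a * c + 1) = a * n + 1 - a * a.
Proof. by case/and4P=> _ _ _ /eqP <-; nia. Qed.

Lemma fibre_row_le n a b : 0 < a ->
  \sum_(c <- upto n) sol n a b c <= (a * b + 1 \in divisors (a * n + 1 - a * a)).
Proof.
move=> a0; case hb: (a * b + 1 \in divisors _).
  apply: sum_bool_le1; first exact: iota_uniq.
  move=> c1 c2 /sol_factor e1 /sol_factor e2.
  have /eqP : (a * b + 1) * (a * c1 + 1) = (a * b + 1) * (a * c2 + 1) by rewrite e1 e2.
  by rewrite eqn_pmul2l ?addn1 // eqSS eqn_pmul2l // => /eqP.
rewrite big1_seq // => c _; apply/eqP; rewrite eqb0; apply/negP => /sol_factor e.
by move: hb; rewrite -dvdn_divisors -e ?dvdn_mulr // muln_gt0 !addn1.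
Qed.

(* Since b |-> ab + 1 is injective, a fibre has at most d(M_a) elements. *)
Lemma fibre_le_ndiv n a : 0 < a -> fibre n a <= ndiv (a * n + 1 - a * a).
Proof.
move=> a0; set M := a * n + 1 - a * a.
apply: (@leq_trans (\sum_(b <- upto n) (a * b + 1 \in divisors M))).
  by apply: leq_sum => b _; apply: fibre_row_le.
rewrite sum_boolE -size_filter /ndiv -(size_map (fun b => a * b + 1)).
apply: uniq_leq_size.
  rewrite map_inj_uniq ?filter_uniq ?iota_uniq //.
  by move=> b1 b2 /eqP; rewrite eqn_add2r eqn_pmul2l // => /eqP.
by move=> d /mapP[b]; rewrite mem_filter => /andP[+ _] ->.
Qed.

Lemma fibre0 n : fibre n 0 = 0.
Proof. by rewrite /fibre big1_seq // => b _; rewrite big1_seq. Qed.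

(* Every solution lies in the fibre of a coordinate a with a^3 <= n; by
   symmetry each of the three choices of coordinate contributes the same. *)
Lemma R3_le_fibres n : R3 n <= 3 * \sum_(a <- upto n) (a ^ 3 <= n) * fibre n a.
Proof.
rewrite R3E; set L := upto n.
pose S (w : nat -> nat -> nat -> nat) :=
  \sum_(x <- L) \sum_(y <- L) \sum_(z <- L) (w x y z ^ 3 <= n) * sol n x y z.
have Sx : S (fun x _ _ => x) = \sum_(a <- L) (a ^ 3 <= n) * fibre n a.
  by apply: eq_bigr => x _; rewrite /fibre big_distrr; apply: eq_bigr => y _; rewrite big_distrr.
have Sy : S (fun _ y _ => y) = \sum_(a <- L) (a ^ 3 <= n) * fibre n a.
  rewrite /S exchange_big; apply: eq_bigr => y _; rewrite /fibre big_distrr.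
  apply: eq_bigr => x _; rewrite big_distrr; apply: eq_bigr => z _.
  by rewrite sol_swap12.
have Sz : S (fun _ _ z => z) = \sum_(a <- L) (a ^ 3 <= n) * fibre n a.
  rewrite /S (eq_bigr _ (fun x _ => exchange_big _ _ _ _ _ _)) exchange_big.
  apply: eq_bigr => z _; rewrite /fibre big_distrr; apply: eq_bigr => x _.
  by rewrite big_distrr; apply: eq_bigr => y _; rewrite sol_rotate.
rewrite mulSn mul2n -addnn -{1}Sx -{1}Sy -Sz /S -!big_split /=.
apply: leq_sum => x _; rewrite -!big_split /=; apply: leq_sum => y _.
rewrite -!big_split /=; apply: leq_sum => z _.
case h: (sol n x y z); rewrite ?muln0 //.
by move: (sol_min_cube h); case: (x ^ 3 <= n); case: (y ^ 3 <= n); case: (z ^ 3 <= n).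
Qed.

Lemma sum_le_count_max (T : eqType) (P : pred T) (f : T -> nat) (s : seq T) :
  \sum_(a <- s | P a) f a <= count P s * \max_(a <- s | P a) f a.
Proof.
rewrite -sum1_count big_distrl /= big_seq_cond [X in _ <= X]big_seq_cond.
by apply: leq_sum => a /andP[a_s Pa]; rewrite mul1n leq_bigmax_seq.
Qed.

Lemma bigmax_pow_le (T : eqType) (P : pred T) (f : T -> nat) (s : seq T) k B :
  0 < k -> (forall a, a \in s -> P a -> f a ^ k <= B) ->
  (\max_(a <- s | P a) f a) ^ k <= B.
Proof.
move=> k0 hf; rewrite big_seq_cond.
elim/big_ind: _ => [|u v hu hv|a /andP[a_s Pa]]; last exact: hf.
  by rewrite exp0n.
by rewrite /maxn; case: ifP.
Qed.

Lemma count_cubes n N : count (fun a => a ^ 3 <= n) (iota 1 N) ^ 3 <= n.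
Proof.
elim: N => [|N ih] //.
have cN : count (fun a => a ^ 3 <= n) (iota 1 N) <= N.
  by rewrite -[X in _ <= X](size_iota 1 N) count_size.
rewrite -[N.+1]addn1 iotaD count_cat /= addn0 add1n.
case cubeN: (N.+1 ^ 3 <= n); last by rewrite addn0.
by rewrite addn1 (leq_trans _ cubeN) // leq_expn2r.
Qed.

Lemma R3_le_divisor_sum n :
  R3 n <= 3 * \sum_(a <- iota 1 n | a ^ 3 <= n) ndiv (a * n + 1 - a * a).
Proof.
apply: (leq_trans (R3_le_fibres n)); rewrite leq_mul2l; apply/orP; right.
rewrite /upto big_cons fibre0 muln0 add0n [X in _ <= X]big_mkcond /= !big_seq.
apply: leq_sum => a; rewrite mem_iota => /andP[a0 _].
by case: (a ^ 3 <= n); rewrite ?mul0n ?mul1n ?fibre_le_ndiv.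
Qed.

Lemma cofactor_bounds n a : 0 < a -> a <= n -> 0 < a * n + 1 - a * a <= n ^ 2.
Proof.
move=> a0 an.
have aa : a * a <= a * n by rewrite leq_mul2l an orbT.
have an2 : a * n <= n * n by rewrite leq_mul2r an orbT.
have a1 : 1 <= a * a by rewrite muln_gt0 a0.
by rewrite expnS expn1; apply/andP; split; lia.
Qed.

Definition bound_const k := 27 ^ k * ((k ^ k) ^ (2 ^ k)) ^ 3.

Lemma R3_pow_bound k n : 0 < k -> 0 < n ->
  R3 n ^ (3 * k) <= bound_const k * n ^ (k + 6).
Proof.
move=> k0 n0; set K := (k ^ k) ^ (2 ^ k).
set P := fun a => a ^ 3 <= n; set f := fun a => ndiv (a * n + 1 - a * a).
set c := count P (iota 1 n); set D := \max_(a <- iota 1 n | P a) f a.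
have R3_le : R3 n <= 3 * (c * D).
  exact: leq_trans (R3_le_divisor_sum n) (leq_mul (leqnn 3) (sum_le_count_max _ _ _)).
have c3 : c ^ 3 <= n by apply: count_cubes.
have Dk : D ^ k <= K * n ^ 2.
  apply: bigmax_pow_le => // a; rewrite mem_iota => /andP[a0 a_lt] _.
  have an : a <= n by lia.
  have /andP[M0 Mn] := cofactor_bounds a0 an.
  by rewrite (leq_trans (ndiv_pow_bound k0 M0)) // leq_mul2l Mn orbT.
apply: (@leq_trans ((3 * (c * D)) ^ (3 * k))); first by rewrite leq_expn2r.
rewrite /bound_const -/K !expnMn expnM (mulnC 3 k) [D ^ _]expnM -mulnA leq_mul2l.
have ck : c ^ (k * 3) <= n ^ k by rewrite mulnC expnM leq_expn2r.
have Dk3 : (D ^ k) ^ 3 <= K ^ 3 * n ^ 6.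
  by rewrite (leq_trans (leq_expn2r 3 Dk)) // expnMn -expnM.
by apply/orP; right; rewrite expnD mulnCA leq_mul.
Qed.

Lemma bound_const_gt0 k : (0 < bound_const k)%coq_nat.
Proof. by apply/ltP; rewrite /bound_const muln_gt0 !expn_gt0; case: k. Qed.

Lemma INR_expn m e : INR (m ^ e) = pow (INR m) e.
Proof. by elim: e => // e ih; rewrite expnS mult_INR ih. Qed.

Lemma R3_pow_bound_real k n : (0 < k)%coq_nat -> (0 < n)%coq_nat ->
  Rle (pow (INR (R3 n)) (3 * k)) (Rmult (INR (bound_const k)) (pow (INR n) (k + 6))).
Proof.
move=> /ltP k0 /ltP n0; rewrite -!INR_expn -mult_INR.
by apply/le_INR/leP/R3_pow_bound.
Qed.
End R3Count.

Open Scope R_scope.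

Lemma root_of_pow_bound (a B x r : R) (m : nat) :
  0 < a -> 0 < B -> 0 < x -> (0 < m)%nat ->
  a ^ m <= B * Rpower x r -> a <= Rpower B (/ INR m) * Rpower x (r / INR m).
Proof.
intros a0 B0 x0 m0 hm.
assert (m_pos : 0 < INR m) by (apply lt_0_INR; exact m0).
assert (root_a : Rpower (a ^ m) (/ INR m) = a).
{ rewrite <- Rpower_pow by exact a0.
  rewrite Rpower_mult, Rinv_r by lra.
  apply Rpower_1; exact a0. }
replace (Rpower x (r / INR m)) with (Rpower (Rpower x r) (/ INR m))
  by (rewrite Rpower_mult; reflexivity).
rewrite <- root_a, Rpower_mult_distr by (try exact B0; unfold Rpower; apply exp_pos).
apply Rle_Rpower_l; [left; apply Rinv_0_lt_compat; exact m_pos|].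
split; [apply pow_lt; exact a0| exact hm].
Qed.

Lemma large_multiple eps : 0 < eps -> exists k : nat, (0 < k)%nat /\ 2 < eps * INR k.
Proof.
intros eps0; destruct (INR_unbounded (2 / eps)) as [k Hk].
exists (S k); split; [lia|].
apply (Rmult_lt_compat_l eps) in Hk; [|exact eps0].
replace (eps * (2 / eps)) with 2 in Hk by (field; lra).
rewrite S_INR; lra.
Qed.

(* For such k the exponent (k + 6)/(3k) = 1/3 + 2/k is at most 1/3 + eps. *)
Lemma exponent_le (k : nat) eps :
  0 < INR k -> 2 < eps * INR k -> INR (k + 6) / INR (3 * k) <= 1/3 + eps.
Proof.
intros k_pos k_large.
rewrite plus_INR, mult_INR; replace (INR 3) with 3 by (simpl; lra).
replace (INR 6) with 6 by (simpl; lra).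
apply Rmult_le_reg_r with (3 * INR k); [lra|].
unfold Rdiv; rewrite Rmult_assoc, Rinv_l by lra; nra.
Qed.

Theorem theorem2 :
  forall eps : R, 0 < eps ->
  exists C : R, 0 < C /\
    forall n : nat, (1 <= n)%nat ->
      INR (R3 n) <= C * Rpower (INR n) (1/3 + eps).
Proof.
intros eps eps0.
destruct (large_multiple eps eps0) as [k [k_pos k_large]].
set (B := INR (R3Count.bound_const k)).
assert (B_pos : 0 < B) by (apply lt_0_INR, R3Count.bound_const_gt0).
exists (Rpower B (/ INR (3 * k))); split; [unfold Rpower; apply exp_pos|].
intros n Hn.
destruct (Nat.eq_dec (R3 n) 0) as [E|E].
{ rewrite E; simpl; apply Rmult_le_pos; left; unfold Rpower; apply exp_pos. }
apply Rle_trans with (Rpower B (/ INR (3 * k)) * Rpower (INR n) (INR (k + 6) / INR (3 * k))).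
- apply root_of_pow_bound; try (apply lt_0_INR; lia); try lia; [exact B_pos|].
  rewrite Rpower_pow by (apply lt_0_INR; lia).
  apply R3Count.R3_pow_bound_real; lia.
- apply Rmult_le_compat_l; [left; unfold Rpower; apply exp_pos|].
  apply Rle_Rpower; [apply (le_INR 1); exact Hn|].
  apply exponent_le; [apply lt_0_INR; exact k_pos | exact k_large].
Qed.
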